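(* For every integer $n\ge 13$, $$\lambda_{\min}\big(\mathcal U(n-5,3)^c\big)<\lambda_{\min}\big(\mathcal U'(n-4)^c\big).$$
   Context: All graphs are simple and finite. For a graph $G$, $\lambda_{\min}(G)$ denotes the least eigenvalue of the adjacency matrix $A(G)$, and $G^c$ denotes the complement of $G$. $K_{1,m}$ is the star with $m$ edges; its vertex of degree $m$ is the center and the others are pendant vertices. $S_m^3$ denotes the graph of order $m$ obtained from $K_{1,m-1}$ by adding one edge between two of its pendant vertices. For integers $p\ge 1$, $q\ge 3$, $\mathcal U(p,q)$ is the graph of order $p+q+2$ obtained from disjoint copies of $K_{1,p}$ and $S_{q+1}^3$ by adding one edge joining a pendant vertex of $K_{1,p}$ to a pendant (degree-one) vertex of $S_{q+1}^3$. For an integer $p\ge 1$, $\mathcal U'(p)$ is the graph of order $p+4$ obtained from disjoint copies of $K_{1,p}$ and the triangle $C_3$ by adding one edge joining a pendant vertex of $K_{1,p}$ to a vertex of $C_3$. *)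

From HB Require Import structures.
From mathcomp Require Import all_boot all_order all_algebra.
Set Implicit Arguments. Unset Strict Implicit. Unset Printing Implicit Defensive.
Import Order.TTheory GRing.Theory Num.Theory.
Local Open Scope ring_scope.

Definition adjmx (R : nzRingType) (m : nat) (e : rel 'I_m) : 'M[R]_m :=
  \matrix_(i, j) ((e i j)%:R : R).

Definition compl (m : nat) (e : rel 'I_m) : rel 'I_m :=
  fun i j => (i != j) && ~~ e i j.

Definition is_lambda_min (R : rcfType) (m : nat) (A : 'M[R]_m) (l : R) : Prop :=
  eigenvalue A l /\ (forall b, eigenvalue A b -> l <= b).

(* U(p,q), vertices 0..p+q+1:
   K_{1,p}: center 0, pendants 1..p;
   S^3_{q+1}: center p+1, pendants p+2..p+q+1, extra edge {p+2,p+3};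
   joining edge {1, p+q+1} (p+q+1 has degree one in S^3_{q+1} as q >= 3). *)
Definition U_edge0 (p q : nat) (i j : nat) : bool :=
  [|| (i == 0)%N && (1 <= j <= p)%N,
      (i == p.+1)%N && (p.+2 <= j <= p + q + 1)%N,
      (i == p.+2)%N && (j == p.+3)%N
    | (i == 1)%N && (j == p + q + 1)%N].

Definition U_graph (p q : nat) : rel 'I_(p + q + 2) :=
  fun i j => U_edge0 p q i j || U_edge0 p q j i.

(* U'(p), vertices 0..p+3:
   K_{1,p}: center 0, pendants 1..p; triangle on p+1,p+2,p+3;
   joining edge {1, p+1}. *)
Definition U'_edge0 (p : nat) (i j : nat) : bool :=
  [|| (i == 0)%N && (1 <= j <= p)%N,
      (i == p.+1)%N && (j == p.+2)%N,
      (i == p.+1)%N && (j == p.+3)%N,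
      (i == p.+2)%N && (j == p.+3)%N
    | (i == 1)%N && (j == p.+1)%N].

Definition U'_graph (p : nat) : rel 'I_(p + 4) :=
  fun i j => U'_edge0 p i j || U'_edge0 p j i.

Arguments U_graph : clear implicits.
Arguments U'_graph : clear implicits.

From HB Require Import structures.
From mathcomp Require Import all_boot all_order all_algebra.
From mathcomp Require Import zify ring lra.
From Stdlib Require Import Classical_Prop.
Set Implicit Arguments. Unset Strict Implicit. Unset Printing Implicit Defensive.
Import Order.TTheory GRing.Theory Num.Theory.
Local Open Scope ring_scope.

(* Both graphs consist of a star K_{1,p} with a leaf attached to a small
   unicyclic piece; their vertices fall into classes (star centre, attached
   leaf, the k = p - 1 free leaves, hub, triangle vertices, ...).  In the
   complement, the eigen-equation at a vertex j reads
        sum(f) - f(j) - sum of f over the G-neighbours of j = x * f(j).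
   - For U(p,3)^c, every root x of a polynomial chiU(x, k) yields an explicit
     eigenvector that is constant on the classes (a column of the adjugate
     of the 6 x 6 quotient matrix).
   - For U'(p)^c, the twin leaves 2, 3 give the eigenvalue -1, and every
     eigenvector for an eigenvalue b other than 0, -1 is constant on the
     classes, so b is a root of the determinant chiU'(b, k) of the 5 x 5
     quotient system.
   - Elementary real inequalities: chiU(., k) is positive at -5 and negative
     at -3 once k >= 7, and chiU(., k - 1) is negative at every root x <= -3
     of chiU'(., k).
   Hence chiU(., n-6) is negative at some c <= lambda_min(U'(n-4)^c), and the
   intermediate value theorem gives a root of it in [-5, c[, which is an
   eigenvalue of U(n-5,3)^c.
   The file proceeds from generic facts (least eigenvalues, eigen-equations
   of complements, twins) to the quotient polynomials and their signs, then
   to the vertex classes and neighbourhoods of the two graphs, and ends with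
   the theorem. *)

Lemma poly_least_root (R : realDomainType) (p : {poly R}) (a : R) :
  p != 0 -> root p a -> exists2 l, root p l & forall b, root p b -> l <= b.
Proof.
elim: (size p) {-2}p (leqnn (size p)) a => [|n IH] {}p size_p a p_neq0 pa.
  by move: size_p; rewrite leqn0 size_poly_eq0 (negbTE p_neq0).
have [q p_eq] := factor_theorem _ _ pa.
have rootp b : root p b = root q b || (b == a) by rewrite p_eq rootM root_XsubC.
have q_neq0 : q != 0 by apply: contraNneq p_neq0 => q0; rewrite p_eq q0 mul0r.
have size_q : (size q <= n)%N.
  by move: size_p; rewrite p_eq size_mul ?polyXsubC_eq0 // size_XsubC addn2.
have [[b qb] | no_root] := classic (exists b, root q b).
  have [l ql l_min] := IH q size_q b q_neq0 qb.
  exists (Num.min l a) => [|c]; first by rewrite rootp; case: leP; rewrite ?ql ?eqxx ?orbT.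
  by rewrite rootp ge_min => /orP [/l_min -> // | /eqP ->]; rewrite lexx orbT.
exists a => [|c]; first by rewrite rootp eqxx orbT.
rewrite rootp => /orP [qc | /eqP -> //]; by case: no_root; exists c.
Qed.

Lemma lambda_min_exists (R : rcfType) (m : nat) (A : 'M[R]_m) (a : R) :
  eigenvalue A a -> exists l, is_lambda_min A l.
Proof.
have chi_neq0 : char_poly A != 0 by apply/monic_neq0/char_poly_monic.
rewrite eigenvalue_root_char => /(poly_least_root chi_neq0) [l chi_l l_min].
by exists l; split=> [|b]; rewrite eigenvalue_root_char // => /l_min.
Qed.

Lemma sum_nat_filter_seq (R : nmodType) (N : nat) (P : pred nat) (f : nat -> R)
    (s : seq nat) :
  uniq s -> (forall i, (i \in s) = (i < N)%N && P i) ->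
  \sum_(0 <= i < N | P i) f i = \sum_(i <- s) f i.
Proof.
move=> s_uniq s_mem; rewrite -big_filter; apply/perm_big/uniq_perm => //.
  by rewrite filter_uniq ?iota_uniq.
by move=> i; rewrite mem_filter mem_index_iota s_mem andbC.
Qed.

Lemma sum_nat_const_on (R : pzSemiRingType) (m n : nat) (f : nat -> R) (c : R) :
  (forall i, (m <= i < n)%N -> f i = c) -> \sum_(m <= i < n) f i = (n - m)%:R * c.
Proof. by move=> f_c; rewrite (eq_big_nat _ _ f_c) sumr_const_nat mulr_natl. Qed.

Section ComplementEigen.
Variables (R : rcfType) (N : nat) (g : nat -> nat -> bool) (G : rel 'I_N).
Hypothesis G_g : forall i j : 'I_N, G i j = g i j.
Hypothesis g_irr : forall i, g i i = false.

Local Notation A := (adjmx R (compl G)).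

(* The coordinate of a row vector at a natural index (0 outside 'I_N). *)
Definition entry (v : 'rV[R]_N) (a : nat) : R :=
  if insub a is Some i then v 0 i else 0.

Lemma entryE (v : 'rV[R]_N) (i : 'I_N) : entry v i = v 0 i.
Proof. by rewrite /entry valK. Qed.

Lemma entry_eq0 (v : 'rV[R]_N) : (forall j, (j < N)%N -> entry v j = 0) -> v = 0.
Proof. by move=> v0; apply/rowP => i; rewrite mxE -entryE v0. Qed.

Lemma compl_action (v : 'rV[R]_N) (f : nat -> R) (v_f : forall i : 'I_N, v 0 i = f i)
    (j : 'I_N) :
  (v *m A) 0 j = \sum_(0 <= i < N) f i - f j - \sum_(0 <= i < N | g i j) f i.
Proof.
rewrite mxE !big_mkord [in RHS](bigD1 j) //=.
rewrite [in RHS](bigID (fun i : 'I_N => g i j)) /=.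
have -> : \sum_(i < N | g i j) f i = \sum_(i < N | (i != j) && g i j) f i.
  by apply: eq_bigl => i; case: eqVneq => [->|]; rewrite ?g_irr.
rewrite (addrC (f j)) addrK [RHS]addrC addKr [RHS]big_mkcond /=.
apply: eq_bigr => i _; rewrite /adjmx /compl !mxE G_g v_f.
by case: (i != j); case: (g i j); rewrite /= ?mulr1 ?mulr0.
Qed.

Lemma compl_eigenvalue (f : nat -> R) (x : R) :
  (forall j, (j < N)%N ->
     \sum_(0 <= i < N) f i - f j - \sum_(0 <= i < N | g i j) f i = x * f j) ->
  (exists2 j, (j < N)%N & f j != 0) -> eigenvalue A x.
Proof.
move=> f_eq [j0 j0N fj0]; apply/eigenvalueP; exists (\row_(i < N) f i).
  apply/rowP => j; rewrite (compl_action (f := f)) => [|i]; last by rewrite mxE.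
  by rewrite f_eq // !mxE.
by apply: contra fj0 => /eqP /rowP /(_ (Ordinal j0N)); rewrite !mxE => ->.
Qed.

Lemma compl_eigen_eq (v : 'rV[R]_N) (x : R) (j : nat) :
  v *m A = x *: v -> (j < N)%N ->
  \sum_(0 <= i < N) entry v i - entry v j - \sum_(0 <= i < N | g i j) entry v i
    = x * entry v j.
Proof.
move=> v_eig jN; have v_entry (i : 'I_N) : v 0 i = entry v i by rewrite entryE.
by rewrite -(compl_action v_entry (Ordinal jN)) v_eig mxE -entryE.
Qed.

(* Two distinct vertices with the same neighbours (twins, hence adjacent in
   the complement) give the eigenvalue -1 of the complement. *)
Lemma twins_eigenvalue_m1 (a b : 'I_N) :
  a != b -> (forall j, g a j = g b j) -> eigenvalue A (-1).
Proof.
move=> ab twin; apply/eigenvalueP; exists (delta_mx 0 a - delta_mx 0 b).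
  rewrite mulmxBl -!rowE; apply/rowP => j; rewrite !mxE /compl !G_g /=.
  case: (eqVneq a j) => [<-|_]; first by rewrite eq_sym ab (negbTE ab) -twin g_irr /=; lra.
  case: (eqVneq j b) => [->|_]; first by rewrite twin g_irr /=; lra.
  by rewrite twin /=; case: (g b j) => /=; lra.
by apply/eqP => /rowP /(_ a); rewrite !mxE !eqxx (negbTE ab) /=; lra.
Qed.

End ComplementEigen.

Section QuotientSystems.
Variable R : rcfType.

(* The factor of the characteristic polynomial of U(p,3)^c carried by the
   6 x 6 quotient system on the vertex classes, with k = p - 1. *)
Definition chiU (x k : R) : R :=
  - 2*k + 7*x + x*k + 3*x^+2 + 11*x^+2*k - 13*x^+3 - x^+3*k - 9*x^+4 - 5*x^+4*k
  + x^+5 - x^+5*k + x^+6.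

(* A column of the adjugate of that quotient system: it solves the system
   whenever chiU x k = 0 (values on centre, leaf 1, free leaves, hub,
   triangle vertices, end vertex). *)
Definition eigU_center (x k : R) : R :=
  - 2 - 2*k - 2*x - 3*x*k + 5*x^+2 + 5*x^+2*k + 5*x^+3 + 5*x^+3*k - x^+4 + x^+4*k - x^+5.
Definition eigU_link (x k : R) : R := 2 - 2*x*k - 5*x^+2 - x^+2*k - 3*x^+3.
Definition eigU_leaf (x : R) : R := 2 + 3*x - 7*x^+2 - 4*x^+3.
Definition eigU_hub (x k : R) : R :=
  - 2 - 2*k - 3*x*k + 2*x^+2 + x^+2*k - x^+3 + x^+3*k - x^+4.
Definition eigU_tri (x k : R) : R :=
  1 + x - x^+2 + 2*x^+2*k - 2*x^+3 + x^+3*k - x^+4.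
Definition eigU_end (x k : R) : R :=
  3*x + 2*x*k + x^+2 + 3*x^+2*k - 3*x^+3 + x^+3*k - x^+4.

(* The determinant of the 5 x 5 quotient eigen-system of U'(p)^c on the
   classes (centre, leaf 1, free leaves, apex, other triangle vertices). *)
Definition chiU' (b k : R) : R :=
  - 2 + 2*k - 2*b - 5*b*k + 5*b^+2 - b^+2*k + 5*b^+3 + 4*b^+3*k - b^+4 + b^+4*k - b^+5.

(* Off the roots of chiU', the quotient system has only the trivial
   solution; each unknown is recovered from the equations by a row of the
   adjugate matrix. *)
Lemma U'_quotient_kernel (b k a0 a1 aw ah au : R) :
  ah + 2 * au = b * a0 ->
  k * aw + 2 * au = b * a1 ->
  a1 + (k - 1) * aw + ah + 2 * au = b * aw ->
  a0 + k * aw = b * ah ->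
  a0 + a1 + k * aw = b * au ->
  chiU' b k != 0 -> [/\ a0 = 0, a1 = 0, aw = 0, ah = 0 & au = 0].
Proof.
move=> e0 e1 e2 e3 e4 chi_neq0.
pose E0 := ah + 2 * au - b * a0.
pose E1 := k * aw + 2 * au - b * a1.
pose E2 := a1 + (k - 1) * aw + ah + 2 * au - b * aw.
pose E3 := a0 + k * aw - b * ah.
pose E4 := a0 + a1 + k * aw - b * au.
have adj a c0 c1 c2 c3 c4 :
    chiU' b k * a = c0 * E0 + c1 * E1 + c2 * E2 + c3 * E3 + c4 * E4 -> a = 0.
  rewrite /E0 /E1 /E2 /E3 /E4 e0 e1 e2 e3 e4 !subrr !mulr0 !addr0 => /eqP.
  by rewrite mulf_eq0 (negbTE chi_neq0) => /eqP.
split.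
- apply: (adj _ (2*k - 2*b - 2*b*k - 2*b^+2 - 4*b^+2*k + b^+3 - b^+3*k + b^+4)
    (2*b + b*k + 2*b^+2) (- 2*k + 2*b*k + 3*b^+2*k)
    (- 2 - 2*b - b*k + b^+2 - b^+2*k + b^+3)
    (2*k - 2*b*k + 2*b^+2 - 2*b^+2*k + 2*b^+3)).
  by rewrite /E0 /E1 /E2 /E3 /E4 /chiU'; ring.
- apply: (adj _ (2*b + b*k + 2*b^+2)
    (- 3*b + 3*b*k - 3*b^+2 - 3*b^+2*k + b^+3 - b^+3*k + b^+4)
    (- 3*b*k + 2*b^+2*k + b^+3*k) (2 - 2*k + 2*b + 2*b*k + b^+2*k)
    (- 2 + 2*k - 2*b - 2*b*k + 2*b^+2 + 2*b^+3)).
  by rewrite /E0 /E1 /E2 /E3 /E4 /chiU'; ring.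
- apply: (adj _ (- 2 + 2*b + 3*b^+2) (- 3*b + 2*b^+2 + b^+3) (2 - 5*b^+2 + b^+4)
    (2 - 2*b + b^+3) (- 2 + 2*b^+2 + 2*b^+3)).
  by rewrite /E0 /E1 /E2 /E3 /E4 /chiU'; ring.
- apply: (adj _ (- 2 - 2*b - b*k + b^+2 - b^+2*k + b^+3)
    (2 - 2*k + 2*b + 2*b*k + b^+2*k) (2*k - 2*b*k + b^+3*k)
    (2*k - 4*b - 4*b^+2 - 3*b^+2*k + b^+3 - b^+3*k + b^+4)
    (- 2*k + 2*b + 2*b^+2 + 2*b^+2*k)).
  by rewrite /E0 /E1 /E2 /E3 /E4 /chiU'; ring.
- apply: (adj _ (k - b*k + b^+2 - b^+2*k + b^+3)
    (- 1 + k - b - b*k + b^+2 + b^+3) (- k + b^+2*k + b^+3*k)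
    (- k + b + b^+2 + b^+2*k)
    (k - b + b*k - b^+2 - 2*b^+2*k + b^+3 - b^+3*k + b^+4)).
  by rewrite /E0 /E1 /E2 /E3 /E4 /chiU'; ring.
Qed.

(* Sign facts, proved by expanding around a point a as a polynomial in
   y = a - x >= 0 with nonnegative coefficients and positive constant term
   (coefficients listed by increasing degree, as read by horner_rec). *)
Lemma horner_rec_cons_ge0 (c : R) (s : seq R) (y : R) :
  0 <= y -> 0 <= c -> 0 <= horner_rec s y -> 0 <= horner_rec (c :: s) y.
Proof. by move=> y_ge0 c_ge0 s_ge0 /=; rewrite addr_ge0 ?mulr_ge0. Qed.

Lemma horner_rec_cons_gt0 (c : R) (s : seq R) (y : R) :
  0 <= y -> 0 < c -> 0 <= horner_rec s y -> 0 < horner_rec (c :: s) y.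
Proof. by move=> y_ge0 c_gt0 s_ge0 /=; rewrite ltr_wpDl ?mulr_ge0. Qed.

Ltac horner_pos y_ge0 :=
  apply: (horner_rec_cons_gt0 y_ge0); first lra;
  by repeat (apply: (horner_rec_cons_ge0 y_ge0); first lra).

Lemma chiU_gt0 (x k : R) : x <= -5 -> 0 <= k -> 0 < chiU x k.
Proof.
move=> x_le k_ge0; have y_ge0 : 0 <= -5 - x by lra.
have -> : chiU x k = horner_rec [:: 8540; 12123; 6973; 2083; 341; 29; 1] (-5 - x)
    + k * horner_rec [:: 393; 809; 526; 151; 20; 1] (-5 - x).
  by rewrite /chiU /=; ring.
apply: ltr_wpDr; last by horner_pos y_ge0.
by apply/mulr_ge0/ltW => //; horner_pos y_ge0.
Qed.

Lemma chiU_lt0_at_m3 (k : R) : 7 <= k -> chiU (-3) k < 0.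
Proof. by rewrite /chiU; lra. Qed.

Lemma eigU_leaf_gt0 (x : R) : x <= -3 -> 0 < eigU_leaf x.
Proof.
move=> x_le; have y_ge0 : 0 <= -3 - x by lra.
have -> : eigU_leaf x = horner_rec [:: 38; 63; 29; 4] (-3 - x).
  by rewrite /eigU_leaf /=; ring.
by horner_pos y_ge0.
Qed.

(* Writing
   chiU' = a + k Q, the root condition forces Q(x) < 0, and
   Q chiU(., k - 1) = r + m chiU'(., k) with r > 0 on ]-oo, -3]. *)
Lemma chiU_lt0_at_chiU'_root (x k : R) :
  x <= -3 -> 0 < k -> chiU' x k = 0 -> chiU x (k - 1) < 0.
Proof.
move=> x_le k_gt0 chi'0; have y_ge0 : 0 <= -3 - x by lra.
pose a := - 2 - 2*x + 5*x^+2 + 5*x^+3 - x^+4 - x^+5.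
pose Q := 2 - 5*x - x^+2 + 4*x^+3 + x^+4.
pose r := - 14*x^+2 + 43*x^+3 + 12*x^+4 - 53*x^+5 - 20*x^+6 + 5*x^+7 + 2*x^+8.
pose m := - 2 + x + 11*x^+2 - x^+3 - 5*x^+4 - x^+5.
have a_gt0 : 0 < a.
  have -> : a = horner_rec [:: 76; 194; 176; 73; 14; 1] (-3 - x) by rewrite /a /=; ring.
  by horner_pos y_ge0.
have r_gt0 : 0 < r.
  have -> : r = horner_rec [:: 171; 1833; 5566; 7112; 4722; 1772; 379; 43; 2] (-3 - x).
    by rewrite /r /=; ring.
  by horner_pos y_ge0.
have Q_lt0 : Q < 0.
  have chiU'E : chiU' x k = a + k * Q by rewrite /chiU' /a /Q; ring.
  have : k * Q < 0 by move: chi'0; rewrite chiU'E; lra.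
  by rewrite pmulr_rlt0.
have : Q * chiU x (k - 1) = r + m * chiU' x k by rewrite /chiU /chiU' /Q /r /m; ring.
rewrite chi'0 mulr0 addr0 => QchiU; have : 0 < Q * chiU x (k - 1) by rewrite QchiU.
by rewrite nmulr_rgt0.
Qed.

(* Intermediate value theorem: chiU(., k) is positive at -5, so a point c
   where it is negative has a root of chiU(., k) strictly below it. *)
Lemma chiU_root_below (k c : R) : 0 <= k -> chiU c k < 0 -> exists2 e, e < c & chiU e k = 0.
Proof.
move=> k_ge0 chic_lt0; have chi5_gt0 := chiU_gt0 (lexx (-5)) k_ge0.
have c_ge : -5 <= c.
  by rewrite leNgt; apply/negP => /ltW /chiU_gt0 /(_ k_ge0); lra.
pose P : {poly R} := - Poly [:: -2*k; 7 + k; 3 + 11*k; -13 - k; -9 - 5*k; 1 - k; 1].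
have PE x : P.[x] = - chiU x k by rewrite hornerN horner_Poly /chiU /=; ring.
have [|e /andP [_ e_le] /rootP] := @poly_ivt R P (-5) c c_ge.
  by rewrite !PE; apply/andP; split; lra.
rewrite PE => /eqP; rewrite oppr_eq0 => /eqP chie0.
exists e => //; rewrite lt_neqAle e_le andbT.
by apply/eqP => ec; move: chic_lt0; rewrite -ec chie0 ltxx.
Qed.

End QuotientSystems.

Section StarGraphs.
Variables (R : rcfType) (p : nat).
Hypothesis p_ge3 : (3 <= p)%N.

(* In both graphs the star K_{1,p} has centre 0; its leaf 1 carries the
   attachment and the k = p - 1 free leaves are 2, ..., p. *)
Local Notation leaves := (index_iota 2 p.+1).
Local Notation k := ((p - 1)%:R : R).

Lemma sum_leaves (f : nat -> R) (c : R) :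
  (forall i, (2 <= i <= p)%N -> f i = c) -> \sum_(i <- leaves) f i = k * c.
Proof.
by move=> f_c; rewrite (sum_nat_const_on (c := c)) ?subSS // => i /f_c.
Qed.

(* The graph U(p,3), on vertices 0, ..., p+4: hub p+1 of S^3_4, triangle
   vertices p+2, p+3, and p+4 joined to the leaf 1. *)
Local Notation NU := (p + 3 + 2)%N.

Definition adjU (i j : nat) : bool := U_edge0 p 3 i j || U_edge0 p 3 j i.

Lemma U_graphE (i j : 'I_NU) : U_graph p 3 i j = adjU i j.
Proof. by []. Qed.

Lemma adjU_irr i : adjU i i = false.
Proof. rewrite /adjU /U_edge0; lia. Qed.

Lemma U_leaf_lt j : (2 <= j <= p)%N -> (j < NU)%N.
Proof. lia. Qed.

Lemma adjU_leaf j i : (2 <= j <= p)%N -> adjU i j = (i == 0%N).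
Proof.
move=> jw; have [j0 j1 jl] : [/\ (j == 0%N) = false, (j == 1%N) = false & (1 <= j <= p)%N]
  by split; lia.
have [jh ju2 ju3 je] : [/\ (j == p.+1) = false, (j == p.+2) = false, (j == p.+3) = false
  & (j == p + 3 + 1)%N = false] by split; lia.
have jhub : (p.+2 <= j)%N = false by lia.
by rewrite /adjU /U_edge0 j0 j1 jl jh ju2 ju3 je jhub /= !andbF !orbF andbT.
Qed.

Lemma U_vertex_cases j : (j < NU)%N -> j = 0%N \/ j = 1%N \/ (2 <= j <= p)%N \/
  j = p.+1 \/ j = p.+2 \/ j = p.+3 \/ j = p.+4.
Proof. lia. Qed.

(* The graph U'(p), on vertices 0, ..., p+3: triangle p+1, p+2, p+3 whose
   apex p+1 is joined to the leaf 1. *)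
Local Notation NU' := (p + 4)%N.

Definition adjU' (i j : nat) : bool := U'_edge0 p i j || U'_edge0 p j i.

Lemma U'_graphE (i j : 'I_NU') : U'_graph p i j = adjU' i j.
Proof. by []. Qed.

Lemma adjU'_irr i : adjU' i i = false.
Proof. rewrite /adjU' /U'_edge0; lia. Qed.

Lemma adjU'_sym i j : adjU' i j = adjU' j i.
Proof. exact: orbC. Qed.

Lemma adjU'_leaf j i : (2 <= j <= p)%N -> adjU' i j = (i == 0%N).
Proof.
move=> jw; have [j0 j1 jl] : [/\ (j == 0%N) = false, (j == 1%N) = false & (1 <= j <= p)%N]
  by split; lia.
have [jh ju2 ju3] : [/\ (j == p.+1) = false, (j == p.+2) = false & (j == p.+3) = false]
  by split; lia.
by rewrite /adjU' /U'_edge0 j0 j1 jl jh ju2 ju3 /= !andbF !orbF andbT.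
Qed.

Lemma U'_vertex_cases j : (j < NU')%N -> j = 0%N \/ j = 1%N \/ (2 <= j <= p)%N \/
  j = p.+1 \/ j = p.+2 \/ j = p.+3.
Proof. lia. Qed.

Lemma U'_vertices_lt :
  [/\ (0 < NU')%N, (1 < NU')%N, (p.+1 < NU')%N, (p.+2 < NU')%N & (p.+3 < NU')%N].
Proof. by split; lia. Qed.

Lemma U'_leaf_lt j : (2 <= j <= p)%N -> (j < NU')%N.
Proof. lia. Qed.

(* Rewrites a sum over a set of vertices given by a predicate into a sum
   over an explicit list; membership and duplicate-freeness of the list are
   linear arithmetic facts. *)
Ltac nbhd_sum s :=
  rewrite (sum_nat_filter_seq _ (s := s));
  [| by rewrite ?cons_uniq ?iota_uniq ?inE ?mem_index_iota /=; lia
   | by move=> ?; rewrite ?inE ?mem_index_iota;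
        unfold adjU, adjU', U_edge0, U'_edge0 in *; lia].

Section NeighbourSums.
Variable f : nat -> R.

Lemma sum_split_leaves (N : nat) (s : seq nat) :
  uniq s -> (forall i, (i \in s) = (i < N)%N && (i \notin leaves)) -> (p < N)%N ->
  \sum_(0 <= i < N) f i = \sum_(i <- leaves) f i + \sum_(i <- s) f i.
Proof.
move=> s_uniq s_mem pN; rewrite (bigID (fun i => i \in leaves)) /=.
rewrite (sum_nat_filter_seq _ s_uniq s_mem); congr (_ + _).
by nbhd_sum constr:(leaves).
Qed.

Lemma U_total_sum : \sum_(0 <= i < NU) f i =
  f 0%N + f 1%N + \sum_(i <- leaves) f i + f p.+1 + f p.+2 + f p.+3 + f p.+4.
Proof.
rewrite (sum_split_leaves (s := [:: 0; 1; p.+1; p.+2; p.+3; p.+4]%N)).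
- by rewrite !big_cons big_nil; ring.
- by rewrite !cons_uniq !inE /=; lia.
- by move=> i; rewrite !inE mem_index_iota; lia.
- lia.
Qed.

Lemma U_nbhd_center : \sum_(0 <= i < NU | adjU i 0) f i = f 1%N + \sum_(i <- leaves) f i.
Proof. by nbhd_sum constr:(1%N :: leaves); rewrite big_cons. Qed.

Lemma U_nbhd_link : \sum_(0 <= i < NU | adjU i 1) f i = f 0%N + f p.+4.
Proof. by nbhd_sum [:: 0; p.+4]%N; rewrite !big_cons big_nil addr0. Qed.

Lemma U_nbhd_leaf j : (2 <= j <= p)%N -> \sum_(0 <= i < NU | adjU i j) f i = f 0%N.
Proof.
move=> jw; rewrite (eq_bigl (fun i => i == 0%N)) => [|i]; last exact: adjU_leaf.
by nbhd_sum [:: 0%N]; rewrite big_seq1.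
Qed.

Lemma U_nbhd_hub : \sum_(0 <= i < NU | adjU i p.+1) f i = f p.+2 + f p.+3 + f p.+4.
Proof. by nbhd_sum [:: p.+2; p.+3; p.+4]; rewrite !big_cons big_nil addr0 !addrA. Qed.

Lemma U_nbhd_tri :
  \sum_(0 <= i < NU | adjU i p.+2) f i = f p.+1 + f p.+3 /\
  \sum_(0 <= i < NU | adjU i p.+3) f i = f p.+1 + f p.+2.
Proof.
by split; [nbhd_sum [:: p.+1; p.+3] | nbhd_sum [:: p.+1; p.+2]];
  rewrite !big_cons big_nil addr0.
Qed.

Lemma U_nbhd_end : \sum_(0 <= i < NU | adjU i p.+4) f i = f 1%N + f p.+1.
Proof. by nbhd_sum [:: 1; p.+1]%N; rewrite !big_cons big_nil addr0. Qed.

Lemma U'_total_sum : \sum_(0 <= i < NU') f i =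
  f 0%N + f 1%N + \sum_(i <- leaves) f i + f p.+1 + f p.+2 + f p.+3.
Proof.
rewrite (sum_split_leaves (s := [:: 0; 1; p.+1; p.+2; p.+3]%N)).
- by rewrite !big_cons big_nil; ring.
- by rewrite !cons_uniq !inE /=; lia.
- by move=> i; rewrite !inE mem_index_iota; lia.
- lia.
Qed.

Lemma U'_nbhd_center : \sum_(0 <= i < NU' | adjU' i 0) f i = f 1%N + \sum_(i <- leaves) f i.
Proof. by nbhd_sum constr:(1%N :: leaves); rewrite big_cons. Qed.

Lemma U'_nbhd_link : \sum_(0 <= i < NU' | adjU' i 1) f i = f 0%N + f p.+1.
Proof. by nbhd_sum [:: 0; p.+1]%N; rewrite !big_cons big_nil addr0. Qed.

Lemma U'_nbhd_leaf j : (2 <= j <= p)%N -> \sum_(0 <= i < NU' | adjU' i j) f i = f 0%N.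
Proof.
move=> jw; rewrite (eq_bigl (fun i => i == 0%N)) => [|i]; last exact: adjU'_leaf.
by nbhd_sum [:: 0%N]; rewrite big_seq1.
Qed.

Lemma U'_nbhd_apex : \sum_(0 <= i < NU' | adjU' i p.+1) f i = f 1%N + f p.+2 + f p.+3.
Proof. by nbhd_sum [:: 1; p.+2; p.+3]%N; rewrite !big_cons big_nil addr0 !addrA. Qed.

Lemma U'_nbhd_tri :
  \sum_(0 <= i < NU' | adjU' i p.+2) f i = f p.+1 + f p.+3 /\
  \sum_(0 <= i < NU' | adjU' i p.+3) f i = f p.+1 + f p.+2.
Proof.
by split; [nbhd_sum [:: p.+1; p.+3] | nbhd_sum [:: p.+1; p.+2]];
  rewrite !big_cons big_nil addr0.
Qed.

End NeighbourSums.

(* The vector of U(p,3) taking the values a0, a1, aw, ah, au, ae on the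
   classes centre, leaf 1, free leaves, hub, triangle, end. *)
Definition U_lift (a0 a1 aw ah au ae : R) (i : nat) : R :=
  if i == 0%N then a0 else if i == 1%N then a1 else if (i <= p)%N then aw
  else if i == p.+1 then ah else if (i <= p.+3)%N then au else ae.

Lemma U_lift_leaf a0 a1 aw ah au ae i :
  (2 <= i <= p)%N -> U_lift a0 a1 aw ah au ae i = aw.
Proof. by move=> ?; rewrite /U_lift; repeat case: ifP => ?; try (exfalso; lia). Qed.

Lemma U_lift_vertices a0 a1 aw ah au ae (f := U_lift a0 a1 aw ah au ae) :
  [/\ f 0%N = a0, f 1%N = a1, f p.+1 = ah, f p.+4 = ae & f p.+2 = au /\ f p.+3 = au].
Proof.
by rewrite /f /U_lift; do !split; repeat case: ifP => ?; try (exfalso; lia).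
Qed.

Lemma U_quotient_eigenvalue (x a0 a1 aw ah au ae : R) :
  ah + 2 * au + ae = x * a0 ->
  k * aw + ah + 2 * au = x * a1 ->
  a1 + (k - 1) * aw + ah + 2 * au + ae = x * aw ->
  a0 + a1 + k * aw = x * ah ->
  a0 + a1 + k * aw + ae = x * au ->
  a0 + k * aw + 2 * au = x * ae ->
  aw != 0 -> eigenvalue (adjmx R (compl (U_graph p 3))) x.
Proof.
have := U_lift_vertices a0 a1 aw ah au ae; have := U_lift_leaf a0 a1 aw ah au ae.
move: (U_lift a0 a1 aw ah au ae) => f f_leaf [f0 f1 fh fe [fu2 fu3]].
have sum_f : \sum_(0 <= i < NU) f i = a0 + a1 + k * aw + ah + 2 * au + ae.
  by rewrite U_total_sum (sum_leaves f_leaf) f0 f1 fh fu2 fu3 fe; ring.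
move=> e0 e1 ew eh eu ee aw_neq0.
apply: (compl_eigenvalue U_graphE adjU_irr (f := f)); last first.
  have leaf2 : (2 <= 2 <= p)%N := ltnW p_ge3.
  by exists 2%N; rewrite ?U_leaf_lt ?f_leaf.
have [U_tri2 U_tri3] := U_nbhd_tri f.
move=> j /U_vertex_cases [->|[->|[jw|[->|[->|[->|->]]]]]]; rewrite sum_f.
- by rewrite U_nbhd_center (sum_leaves f_leaf) f0 f1; lra.
- by rewrite U_nbhd_link f0 f1 fe; lra.
- by rewrite U_nbhd_leaf // f_leaf // f0; lra.
- by rewrite U_nbhd_hub fh fu2 fu3 fe; lra.
- by rewrite U_tri2 fh fu2 fu3; lra.
- by rewrite U_tri3 fh fu2 fu3; lra.
- by rewrite U_nbhd_end f1 fh fe; lra.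
Qed.

Lemma U_eigenvalue_of_chiU_root (x : R) :
  chiU x k = 0 -> eigU_leaf x != 0 -> eigenvalue (adjmx R (compl (U_graph p 3))) x.
Proof.
move=> chi0 leaf_neq0.
apply: (U_quotient_eigenvalue (a0 := eigU_center x k) (a1 := eigU_link x k)
  (ah := eigU_hub x k) (au := eigU_tri x k) (ae := eigU_end x k) _ _ _ _ _ _ leaf_neq0);
  rewrite /eigU_center /eigU_link /eigU_leaf /eigU_hub /eigU_tri /eigU_end; try ring.
by rewrite -[RHS]addr0 -chi0 /chiU; ring.
Qed.

(* The free leaves 2 and 3 of U'(p) are twins. *)
Lemma U'_eigenvalue_m1 : eigenvalue (adjmx R (compl (U'_graph p))) (-1).
Proof.
have leaf2 : (2 <= 2 <= p)%N := ltnW p_ge3.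
have leaf3 : (2 <= 3 <= p)%N := p_ge3.
apply: (@twins_eigenvalue_m1 R _ _ _ U'_graphE adjU'_irr
  (Ordinal (U'_leaf_lt leaf2)) (Ordinal (U'_leaf_lt leaf3))) => // j.
by rewrite /= !(adjU'_sym _ j) !adjU'_leaf.
Qed.

(* An eigenvector of U'(p)^c for an eigenvalue b other than 0 and -1 is
   constant on the free leaves and on the two triangle vertices p+2, p+3,
   so it solves the quotient system; hence chiU'(b, k) = 0. *)
Lemma U'_eigenvalue_chiU'_root (b : R) :
  eigenvalue (adjmx R (compl (U'_graph p))) b -> b != -1 -> b != 0 -> chiU' b k = 0.
Proof.
have [lt0 lt1 lt_apex lt_tri2 lt_tri3] := U'_vertices_lt.
have leaf2 : (2 <= 2 <= p)%N := ltnW p_ge3.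
move=> /eigenvalueP [v v_eig v_neq0] b_neqm1 b_neq0.
have b1_neq0 : b + 1 != 0 by rewrite addr_eq0.
apply/eqP; apply: contraNT v_neq0 => chi_neq0; apply/eqP/entry_eq0.
have eq_at := compl_eigen_eq U'_graphE adjU'_irr v_eig.
move: (entry v) eq_at => f eq_at; have [U'_tri2 U'_tri3] := U'_nbhd_tri f.
have leaf_eq j : (2 <= j <= p)%N -> (b + 1) * f j = \sum_(0 <= i < NU') f i - f 0%N.
  by move=> jw; have := eq_at j (U'_leaf_lt jw); rewrite U'_nbhd_leaf //; lra.
have f_leaf j : (2 <= j <= p)%N -> f j = f 2%N.
  by move=> jw; apply: (mulfI b1_neq0); rewrite !leaf_eq.
have f_tri : f p.+3 = f p.+2.
  have := eq_at p.+2 lt_tri2; have := eq_at p.+3 lt_tri3.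
  by rewrite U'_tri2 U'_tri3 => E3 E2; apply: (mulfI b_neq0); lra.
have S_classes : \sum_(0 <= i < NU') f i = f 0%N + f 1%N + k * f 2%N + f p.+1 + 2 * f p.+2.
  by rewrite U'_total_sum (sum_leaves f_leaf) f_tri; ring.
have [z0 z1 zw zh zu] : [/\ f 0%N = 0, f 1%N = 0, f 2%N = 0, f p.+1 = 0 & f p.+2 = 0].
  apply: (U'_quotient_kernel _ _ _ _ _ chi_neq0).
  - have := eq_at 0%N lt0.
    by rewrite U'_nbhd_center (sum_leaves f_leaf) S_classes; lra.
  - by have := eq_at 1%N lt1; rewrite U'_nbhd_link S_classes; lra.
  - by have := leaf_eq 2%N leaf2; rewrite S_classes; lra.
  - by have := eq_at p.+1 lt_apex; rewrite U'_nbhd_apex f_tri S_classes; lra.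
  - by have := eq_at p.+2 lt_tri2; rewrite U'_tri2 f_tri S_classes; lra.
move=> j /U'_vertex_cases [->|[->|[jw|[->|[->|->]]]]] //.
- by rewrite f_leaf.
- by rewrite f_tri.
Qed.

(* Below any eigenvalue l of U'(p)^c (and below -3) the polynomial
   chiU(., k - 1) takes a negative value: either l >= -3 and -3 works, or
   l < -3 is a root of chiU'(., k). *)
Lemma chiU_neg_below_U'_eigenvalue (l : R) :
  8 <= k -> eigenvalue (adjmx R (compl (U'_graph p))) l ->
  exists c, [/\ c <= l, c <= -3 & chiU c (k - 1) < 0].
Proof.
move=> k_ge8 l_eig; have [l_ge | l_lt] := lerP (-3) l.
  by exists (-3); rewrite chiU_lt0_at_m3 //; lra.
exists l; split=> //; first exact: ltW.
apply: chiU_lt0_at_chiU'_root (ltW l_lt) _ _; first lra.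
by apply: U'_eigenvalue_chiU'_root; rewrite // lt_eqF // (lt_trans l_lt); lra.
Qed.

End StarGraphs.

Theorem lemma2p1 (R : rcfType) (n : nat) (hn : (13 <= n)%N) :
  exists l1 l2 : R,
    [/\ is_lambda_min (adjmx R (compl (U_graph (n - 5)%N 3))) l1,
        is_lambda_min (adjmx R (compl (U'_graph (n - 4)%N))) l2
      & l1 < l2].
Proof.
have pU_ge3 : (3 <= n - 5)%N by lia.
have pU'_ge3 : (3 <= n - 4)%N by lia.
have kU'_ge8 : 8 <= (n - 4 - 1)%:R :> R by rewrite (ler_nat R 8); lia.
have kUE : (n - 4 - 1)%:R - 1 = (n - 5 - 1)%:R :> R.
  by apply/eqP; rewrite subr_eq natr1; apply/eqP; congr _%:R; lia.
have [l2 [l2_eig l2_min]] := lambda_min_exists (U'_eigenvalue_m1 R pU'_ge3).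
have [c [c_le_l2 c_le3]] := chiU_neg_below_U'_eigenvalue pU'_ge3 kU'_ge8 l2_eig.
rewrite kUE => /chiU_root_below [|e e_lt_c chie0]; first by rewrite ler0n.
have e_eig : eigenvalue (adjmx R (compl (U_graph (n - 5) 3))) e.
  apply: (U_eigenvalue_of_chiU_root pU_ge3 chie0).
  by rewrite gt_eqF // eigU_leaf_gt0 // (le_trans (ltW e_lt_c)).
have [l1 [l1_eig l1_min]] := lambda_min_exists e_eig.
exists l1, l2; split=> //.
by rewrite (le_lt_trans (l1_min e e_eig)) // (lt_le_trans e_lt_c).
Qed.
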